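(* Let $X\in\mathbb{R}^{m\times m}$, $Y\in\mathbb{R}^{n\times n}$, and define $L:\mathbb{R}^{m\times n}\to\mathbb{R}^{m\times n}$ by $L(A)=XAY$. Then $L$ maps every semipositive $m\times n$ matrix to a semipositive matrix if and only if either $X$ is row positive and $Y$ is inverse nonnegative, or $-X$ is row positive and $-Y$ is inverse nonnegative.
   Context: For a matrix or vector, $\geq 0$ means entrywise nonnegative and $>0$ entrywise positive. A matrix $A\in\mathbb{R}^{m\times n}$ is semipositive if there exists $x\in\mathbb{R}^n$ with $x\geq 0$ and $Ax>0$. A square matrix $X$ is row positive if $X\geq 0$ and every row of $X$ contains a nonzero entry. A square matrix $Y$ is inverse nonnegative if $Y$ is invertible and $Y^{-1}\geq 0$. *)

From HB Require Import structures.
From mathcomp Require Import all_boot all_order all_algebra.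
Set Implicit Arguments. Unset Strict Implicit. Unset Printing Implicit Defensive.
Import Order.TTheory GRing.Theory Num.Theory.
Local Open Scope ring_scope.

Definition semipositive (R : realFieldType) (m n : nat) (A : 'M[R]_(m, n)) : Prop :=
  exists x : 'cV[R]_n, (forall j, 0 <= x j 0) /\ (forall i, 0 < (A *m x) i 0).

Definition row_positive (R : realFieldType) (m : nat) (X : 'M[R]_m) : Prop :=
  (forall i j, 0 <= X i j) /\ (forall i, exists j, X i j != 0).

Definition inverse_nonnegative (R : realFieldType) (n : nat) (Y : 'M[R]_n) : Prop :=
  Y \in unitmx /\ (forall i j, 0 <= invmx Y i j).

From HB Require Import structures.
From mathcomp Require Import all_boot all_order all_algebra.
From mathcomp Require Import ring lra.
Set Implicit Arguments. Unset Strict Implicit. Unset Printing Implicit Defensive.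
Import Order.TTheory GRing.Theory Num.Theory.
Local Open Scope ring_scope.

(* Sufficiency is a change of variables: if [A x > 0] with [x >= 0], then
   [X A Y (Y^-1 x) = X (A x)], and a nonnegative row positive [X] keeps a
   positive vector positive.  For necessity, feed [L] the rank-one
   semipositive matrices [u a] with [u > 0]: [X u a Y z > 0] for some
   [z >= 0] forces every entry of [X u] to be nonzero and of one common sign,
   which we may take positive after replacing [(X, Y)] by [(-X, -Y)].
   Perturbing [u] along a negative entry [X i j] would make [(X u) i] vanish,
   so [X >= 0]; and taking [a = -b] shows that [b Y >= 0] implies [b >= 0],
   i.e. [Y] is a monotone matrix, which means inverse nonnegative. *)

Definition preserves_semipositive (R : realFieldType) (m n : nat)
    (X : 'M[R]_m) (Y : 'M[R]_n) :=
  forall A : 'M[R]_(m, n), semipositive A -> semipositive (X *m A *m Y).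

Lemma preserves_semipositiveN (R : realFieldType) (m n : nat)
    (X : 'M[R]_m) (Y : 'M[R]_n) :
  preserves_semipositive (- X) (- Y) <-> preserves_semipositive X Y.
Proof.
suff XY_N (X' : 'M[R]_m) (Y' : 'M[R]_n) :
    preserves_semipositive X' Y' -> preserves_semipositive (- X') (- Y').
  by split=> /XY_N; rewrite ?opprK.
by move=> XY' A /XY'; rewrite mulNmx mulmxN mulNmx opprK.
Qed.

Lemma row_positive_mulmx_gt0 (R : realFieldType) (m : nat) (X : 'M[R]_m)
    (w : 'cV[R]_m) :
  row_positive X -> (forall j, 0 < w j 0) -> forall i, 0 < (X *m w) i 0.
Proof.
move=> [X_ge0 X_row] w_gt0 i; have [j Xij_neq0] := X_row i.
rewrite mxE (bigD1 j) //=.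
have Xijw_gt0 : 0 < X i j * w j 0.
  by rewrite mulr_gt0 // lt_def Xij_neq0 X_ge0.
have rest_ge0 : 0 <= \sum_(k | k != j) X i k * w k 0.
  by apply: sumr_ge0 => k _; rewrite mulr_ge0 // ltW.
lra.
Qed.

Lemma inverse_nonnegative_of_monotone (R : realFieldType) (n : nat)
    (Y : 'M[R]_n) :
  (forall b : 'rV[R]_n, (forall k, 0 <= (b *m Y) 0 k) -> forall k, 0 <= b 0 k) ->
  inverse_nonnegative Y.
Proof.
move=> monoY.
have Y_unit : Y \in unitmx.
  rewrite unitmxE unitfE; apply/negP => /det0P [v v_neq0 vY0].
  move/negP: v_neq0; apply; apply/eqP/matrixP => i k; rewrite (ord1 i) mxE.
  have v_ge0 : 0 <= v 0 k by apply: monoY => l; rewrite vY0 mxE.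
  have vN_ge0 : 0 <= (- v) 0 k.
    by apply: monoY => l; rewrite mulNmx vY0 oppr0 mxE.
  move: vN_ge0; rewrite mxE; lra.
split=> // i j.
have -> : invmx Y i j = ((delta_mx 0 i : 'rV[R]_n) *m invmx Y) 0 j.
  by rewrite -rowE mxE.
apply: monoY => k; rewrite -mulmxA mulVmx // mulmx1 mxE.
by case: (_ && _).
Qed.

Lemma semipositive_mul_col_row (R : realFieldType) (m n : nat)
    (u : 'cV[R]_m) (a : 'rV[R]_n) (j : 'I_n) :
  (forall i, 0 < u i 0) -> 0 < a 0 j -> semipositive (u *m a).
Proof.
move=> u_gt0 aj_gt0; exists (delta_mx j 0); split.
  by move=> k; rewrite mxE; case: (_ && _).
by move=> i; rewrite -mulmxA -colE !mxE big_ord1 !mxE; apply: mulr_gt0.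
Qed.

Lemma preserves_semipositive_mul_col_row (R : realFieldType) (m n : nat)
    (X : 'M[R]_m) (Y : 'M[R]_n) (u : 'cV[R]_m) (a : 'rV[R]_n) (j : 'I_n) :
  preserves_semipositive X Y -> (forall i, 0 < u i 0) -> 0 < a 0 j ->
  exists2 z : 'cV[R]_n, forall k, 0 <= z k 0 &
    forall i, 0 < (X *m u) i 0 * (a *m Y *m z) 0 0.
Proof.
move=> XY u_gt0 aj_gt0.
have [z [z_ge0 XuaYz_gt0]] := XY _ (semipositive_mul_col_row u_gt0 aj_gt0).
exists z => // i; move: (XuaYz_gt0 i).
have -> : X *m (u *m a) *m Y *m z = (X *m u) *m (a *m Y *m z).
  by rewrite !mulmxA.
by rewrite mxE big_ord1.
Qed.

Section PositiveCase.

Variables (R : realFieldType) (m n : nat) (X : 'M[R]_m) (Y : 'M[R]_n).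
Hypothesis XY : preserves_semipositive X Y.
Variables (j0 : 'I_n) (u0 : 'cV[R]_m) (i0 : 'I_m).
Hypothesis u0_gt0 : forall i, 0 < u0 i 0.
Hypothesis Xu0_gt0 : 0 < (X *m u0) i0 0.

Let e0 : 'rV[R]_n := delta_mx 0 j0.

Let e0_gt0 : 0 < e0 0 j0.
Proof. by rewrite mxE !eqxx. Qed.

Lemma mulmx_pos_neq0 (u : 'cV[R]_m) i :
  (forall k, 0 < u k 0) -> (X *m u) i 0 != 0.
Proof.
move=> u_gt0; have [z _ /(_ i)] :=
  preserves_semipositive_mul_col_row XY u_gt0 e0_gt0.
by apply: contraTneq => ->; rewrite mul0r ltxx.
Qed.

Lemma mulmx_pos0_gt0 i : 0 < (X *m u0) i 0.
Proof.
have [z _ Xu0_pos] := preserves_semipositive_mul_col_row XY u0_gt0 e0_gt0.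
have := Xu0_pos i0; rewrite (pmulr_rgt0 _ Xu0_gt0) => c_gt0.
by have := Xu0_pos i; rewrite (pmulr_lgt0 _ c_gt0).
Qed.

Lemma row_positive_of_preserves : row_positive X.
Proof.
have X_ge0 i j : 0 <= X i j.
  rewrite leNgt; apply/negP => Xij_lt0.
  pose s := (X *m u0) i 0 / - X i j.
  pose u : 'cV[R]_m := u0 + s *: delta_mx j 0.
  have s_gt0 : 0 < s by rewrite divr_gt0 ?mulmx_pos0_gt0 ?oppr_gt0.
  have u_gt0 k : 0 < u k 0.
    have := u0_gt0 k; rewrite !mxE; case: (_ && _) => /=; lra.
  have /negP := mulmx_pos_neq0 i u_gt0; apply.
  have Xij_neq0 : X i j != 0 by rewrite ltr0_neq0.
  rewrite mulmxDr -scalemxAr -colE mxE [X in _ + X]mxE [X in _ + _ * X]mxE /s.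
  by apply/eqP; field.
split=> // i; apply/existsP; apply: contraTT (mulmx_pos0_gt0 i).
move=> /existsPn X_row0; rewrite mxE big1 ?ltxx // => j _.
by move: (X_row0 j); rewrite negbK => /eqP ->; rewrite mul0r.
Qed.

Lemma inverse_nonnegative_of_preserves : inverse_nonnegative Y.
Proof.
apply: inverse_nonnegative_of_monotone => b bY_ge0 k.
rewrite leNgt; apply/negP => bk_lt0.
have bNk_gt0 : 0 < (- b) 0 k by rewrite mxE oppr_gt0.
have [z z_ge0 /(_ i0)] := preserves_semipositive_mul_col_row XY u0_gt0 bNk_gt0.
rewrite (pmulr_rgt0 _ Xu0_gt0) !mulNmx mxE oppr_gt0 ltNge.
by apply/negP; rewrite mxE sumr_ge0 // => l _; rewrite mulr_ge0.
Qed.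

End PositiveCase.

Lemma preserves_semipositive_of_pos (R : realFieldType) (m n : nat)
    (X : 'M[R]_m) (Y : 'M[R]_n) :
  row_positive X -> inverse_nonnegative Y -> preserves_semipositive X Y.
Proof.
move=> X_pos [Y_unit invY_ge0] A [x [x_ge0 Ax_gt0]].
exists (invmx Y *m x); split.
  by move=> k; rewrite mxE sumr_ge0 // => l _; rewrite mulr_ge0.
rewrite -!mulmxA (mulmxA Y) (mulmxV Y_unit) mul1mx.
exact: row_positive_mulmx_gt0.
Qed.

Theorem mainTheorem8 (R : realFieldType) (m n : nat)
  (Hm : (0 < m)%N) (Hn : (0 < n)%N) (X : 'M[R]_m) (Y : 'M[R]_n) :
  (forall A : 'M[R]_(m, n), semipositive A -> semipositive (X *m A *m Y)) <->
  ((row_positive X /\ inverse_nonnegative Y) \/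
   (row_positive (- X) /\ inverse_nonnegative (- Y))).
Proof.
split=> [XY | [[X_pos Y_inn] | [XN_pos YN_inn]]].
- have i0 : 'I_m := Ordinal Hm; have j0 : 'I_n := Ordinal Hn.
  have [u0 u0_gt0] : exists u0 : 'cV[R]_m, forall i, 0 < u0 i 0.
    by exists (const_mx 1) => i; rewrite mxE.
  have pos_case (X' : 'M[R]_m) (Y' : 'M[R]_n) :
      preserves_semipositive X' Y' -> 0 < (X' *m u0) i0 0 ->
      row_positive X' /\ inverse_nonnegative Y'.
    move=> X'Y' X'u0_gt0; split.
    + exact: (row_positive_of_preserves X'Y' j0 u0_gt0 X'u0_gt0).
    + exact: (inverse_nonnegative_of_preserves X'Y' u0_gt0 X'u0_gt0).
  have := mulmx_pos_neq0 XY j0 i0 u0_gt0.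
  rewrite neq_lt => /orP [Xu0_lt0 | Xu0_gt0].
  + right; apply: (pos_case (- X) (- Y)).
    * exact: (proj2 (preserves_semipositiveN X Y) XY).
    * by rewrite mulNmx mxE oppr_gt0.
  + by left; apply: (pos_case X Y).
- exact: (preserves_semipositive_of_pos X_pos Y_inn).
- apply: (proj1 (preserves_semipositiveN X Y)).
  exact: (preserves_semipositive_of_pos XN_pos YN_inn).
Qed.
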